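(* Let $C$ be a hereditary pointed coalgebra with Gabriel quiver $Q$. The following are equivalent: (1) $C$ is left f-qcF; (2) $C$ is right f-qcF; (3) $C$ is left qcF; (4) $C$ is right qcF; (5) $C$ is coFrobenius; (6) $C$ is cosemisimple; (7) $Q$ is discrete (has no arrows).
   Context: $\Bbbk$ is a field; all coalgebras are over $\Bbbk$. A coalgebra is pointed if all its simple subcoalgebras are one dimensional, and hereditary if homomorphic images of injective right (equivalently left) comodules are injective. The path coalgebra $\Bbbk Q$ of a quiver $Q$ has basis all paths of $Q$ (including trivial paths = vertices), with $\Delta(p)=\sum_{xy=p}x\otimes y$ ($xy$ = concatenation) and $\varepsilon(p)=1$ if $p$ is trivial and $0$ otherwise. It is known that every pointed hereditary coalgebra $C$ is isomorphic to $\Bbbk Q$ for a unique quiver $Q$, called the Gabriel quiver of $C$. The dual algebra $C^*$ has product $(fg)(x)=\sum f(x_1)g(x_2)$; right $C$-comodules (coaction $m\mapsto \sum m_0\otimes m_1$) are left $C^*$-modules via $f\rightharpoonup m=\sum m_0 f(m_1)$, and left $C$-comodules (coaction $m\mapsto\sum m_{-1}\otimes m_0$) are right $C^*$-modules via $m\leftharpoonup f=\sum f(m_{-1})m_0$; in particular $C$ is a left and a right $C^*$-module. $C$ is left (right) qcF if $C$ embeds as a left (right) $C^*$-module in a free left (right) $C^*$-module. $C$ is left f-qcF if every finite dimensional right $C$-comodule embeds as a left $C^*$-module in a free left $C^*$-module; right f-qcF if every finite dimensional left $C$-comodule embeds as a right $C^*$-module in a free right $C^*$-module. $C$ is coFrobenius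 if $C$ embeds in $C^*$ as a left $C^*$-module (equivalently, as a right $C^*$-module). $C$ is cosemisimple if it is a direct sum of simple subcoalgebras. *)

(* MathComp has no tensor product, so
   an element of U (x) V is represented by a finite list of pairs
   [:: (u1,v1); ...] (meaning sum_i u_i (x) v_i), and two such lists denote
   the same tensor iff every bilinear map out of U x V (into any K-vector
   space W) takes the same value on them -- this is exactly the universal
   property defining U (x) V. *)
From HB Require Import structures.
From mathcomp Require Import all_boot all_order all_algebra.
Set Implicit Arguments.
Unset Strict Implicit.
Unset Printing Implicit Defensive.
Import Order.TTheory GRing.Theory Num.Theory.
Local Open Scope ring_scope.

Section Coalgebras.
Variable K : fieldType.

Definition lin (U V : lmodType K) (f : U -> V) :=
  forall (a : K) (x y : U), f (a *: x + y) = a *: f x + f y.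
Definition linf (U : lmodType K) (f : U -> K) :=
  forall (a : K) (x y : U), f (a *: x + y) = a * f x + f y.

Definition bilin (U V W : lmodType K) (b : U -> V -> W) :=
  (forall v, lin (fun u => b u v)) /\ (forall u, lin (b u)).
Definition trilin (U V X W : lmodType K) (b : U -> V -> X -> W) :=
  [/\ forall v x, lin (fun u => b u v x),
      forall u x, lin (fun v => b u v x) &
      forall u v, lin (b u v)].

Definition teq2 (U V : lmodType K) (t1 t2 : seq (U * V)) :=
  forall (W : lmodType K) (b : U -> V -> W), bilin b ->
    \sum_(p <- t1) b p.1 p.2 = \sum_(p <- t2) b p.1 p.2.
Definition teq3 (U V X : lmodType K) (t1 t2 : seq (U * V * X)) :=
  forall (W : lmodType K) (b : U -> V -> X -> W), trilin b ->
    \sum_(p <- t1) b p.1.1 p.1.2 p.2 = \sum_(p <- t2) b p.1.1 p.1.2 p.2.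

Record coalg (C : lmodType K) := Coalg {
  Delta : C -> seq (C * C);
  eps : C -> K;
  Delta_lin : forall (a : K) (x y : C),
    teq2 (Delta (a *: x + y)) ([seq (a *: p.1, p.2) | p <- Delta x] ++ Delta y);
  eps_lin : linf eps;
  coassoc : forall c : C,
    teq3 (flatten [seq [seq (q.1, q.2, p.2) | q <- Delta p.1] | p <- Delta c])
         (flatten [seq [seq (p.1, q.1, q.2) | q <- Delta p.2] | p <- Delta c]);
  counitl : forall c : C, \sum_(p <- Delta c) eps p.1 *: p.2 = c;
  counitr : forall c : C, \sum_(p <- Delta c) eps p.2 *: p.1 = c
}.

Section OverC.
Variables (C : lmodType K) (cC : coalg C).
Local Notation D := (Delta cC).
Local Notation ep := (eps cC).

Record rcomod := RComod {
  rc_sort : lmodType K;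
  rc_rho : rc_sort -> seq (rc_sort * C);
  rc_rho_lin : forall (a : K) (x y : rc_sort),
    teq2 (rc_rho (a *: x + y)) ([seq (a *: p.1, p.2) | p <- rc_rho x] ++ rc_rho y);
  rc_coassoc : forall m : rc_sort,
    teq3 (flatten [seq [seq (q.1, q.2, p.2) | q <- rc_rho p.1] | p <- rc_rho m])
         (flatten [seq [seq (p.1, q.1, q.2) | q <- D p.2] | p <- rc_rho m]);
  rc_counit : forall m : rc_sort, \sum_(p <- rc_rho m) ep p.2 *: p.1 = m
}.

Record lcomod := LComod {
  lc_sort : lmodType K;
  lc_rho : lc_sort -> seq (C * lc_sort);
  lc_rho_lin : forall (a : K) (x y : lc_sort),
    teq2 (lc_rho (a *: x + y)) ([seq (p.1, a *: p.2) | p <- lc_rho x] ++ lc_rho y);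
  lc_coassoc : forall m : lc_sort,
    teq3 (flatten [seq [seq (q.1, q.2, p.2) | q <- D p.1] | p <- lc_rho m])
         (flatten [seq [seq (p.1, q.1, q.2) | q <- lc_rho p.2] | p <- lc_rho m]);
  lc_counit : forall m : lc_sort, \sum_(p <- lc_rho m) ep p.1 *: p.2 = m
}.

Definition rc_morph (M N : rcomod) (f : rc_sort M -> rc_sort N) :=
  lin f /\ forall m, teq2 (rc_rho (f m)) [seq (f p.1, p.2) | p <- rc_rho m].

Definition rc_injective (M : rcomod) :=
  forall (N N' : rcomod) (i : rc_sort N -> rc_sort N') (g : rc_sort N -> rc_sort M),
    rc_morph i -> injective i -> rc_morph g ->
    exists h : rc_sort N' -> rc_sort M, rc_morph h /\ forall n, h (i n) = g n.

Definition hereditary :=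
  forall (M N : rcomod) (f : rc_sort M -> rc_sort N),
    rc_morph f -> (forall n, exists m, f m = n) -> rc_injective M -> rc_injective N.

Definition subspace (P : C -> Prop) :=
  P 0 /\ forall (a : K) x y, P x -> P y -> P (a *: x + y).
Definition subcoalg (P : C -> Prop) :=
  subspace P /\ forall d, P d ->
    exists t : seq (C * C), (forall p, p \in t -> P p.1 /\ P p.2) /\ teq2 (D d) t.
Definition simple_subcoalg (P : C -> Prop) :=
  [/\ subcoalg P, exists d, P d /\ d != 0 &
      forall E : C -> Prop, subcoalg E -> (forall x, E x -> P x) ->
        (forall x, E x -> x = 0) \/ (forall x, P x -> E x)].
Definition one_dim (P : C -> Prop) :=
  exists x : C, x != 0 /\ forall d, P d <-> exists a : K, d = a *: x.
Definition pointed :=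
  forall P : C -> Prop, simple_subcoalg P -> one_dim P.

Definition cosemisimple :=
  exists (I : Type) (S : I -> C -> Prop),
    [/\ forall i, simple_subcoalg (S i),
        forall c : C, exists n (e : 'I_n -> I) (d : 'I_n -> C),
          (forall k, S (e k) (d k)) /\ c = \sum_(k < n) d k &
        forall n (e : 'I_n -> I) (d : 'I_n -> C), injective e ->
          (forall k, S (e k) (d k)) -> \sum_(k < n) d k = 0 -> forall k, d k = 0].

Definition cmul (f g : C -> K) (x : C) := \sum_(p <- D x) f p.1 * g p.2.

Definition rc_lact (M : rcomod) (f : C -> K) (m : rc_sort M) :=
  \sum_(p <- rc_rho m) f p.2 *: p.1.
Definition lc_ract (M : lcomod) (m : lc_sort M) (f : C -> K) :=
  \sum_(p <- lc_rho m) f p.1 *: p.2.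
Definition C_lact (f : C -> K) (c : C) := \sum_(p <- D c) f p.2 *: p.1.
Definition C_ract (c : C) (f : C -> K) := \sum_(p <- D c) f p.1 *: p.2.

(* M (with left C^dual-action act) embeds, as a left C^dual-module, into a free left
   C^dual-module (C^dual)^(I): phi m is a finitely supported family I -> C^dual. *)
Definition embeds_free_left (M : lmodType K) (act : (C -> K) -> M -> M) :=
  exists (I : Type) (phi : M -> I -> C -> K),
    [/\ forall m i, linf (phi m i),
        forall m, exists n (e : 'I_n -> I),
          forall i, (forall k, e k <> i) -> forall x, phi m i x = 0,
        forall (a : K) m m' i x, phi (a *: m + m') i x = a * phi m i x + phi m' i x,
        forall f m i x, linf f -> phi (act f m) i x = cmul f (phi m i) x &
        forall m m', (forall i x, phi m i x = phi m' i x) -> m = m'].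

Definition embeds_free_right (M : lmodType K) (act : M -> (C -> K) -> M) :=
  exists (I : Type) (phi : M -> I -> C -> K),
    [/\ forall m i, linf (phi m i),
        forall m, exists n (e : 'I_n -> I),
          forall i, (forall k, e k <> i) -> forall x, phi m i x = 0,
        forall (a : K) m m' i x, phi (a *: m + m') i x = a * phi m i x + phi m' i x,
        forall f m i x, linf f -> phi (act m f) i x = cmul (phi m i) f x &
        forall m m', (forall i x, phi m i x = phi m' i x) -> m = m'].

Definition findim (M : lmodType K) :=
  exists n (v : 'I_n -> M), forall m, exists a : 'I_n -> K,
    m = \sum_(k < n) a k *: v k.

Definition left_qcF := embeds_free_left C_lact.
Definition right_qcF := embeds_free_right C_ract.
Definition left_fqcF :=
  forall M : rcomod, findim (rc_sort M) -> embeds_free_left (@rc_lact M).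
Definition right_fqcF :=
  forall M : lcomod, findim (lc_sort M) -> embeds_free_right (@lc_ract M).

(* coFrobenius: C embeds in C^dual as a left C^dual-module *)
Definition coFrobenius :=
  exists phi : C -> C -> K,
    [/\ forall c, linf (phi c),
        forall (a : K) c c' x, phi (a *: c + c') x = a * phi c x + phi c' x,
        forall f c x, linf f -> phi (C_lact f c) x = cmul f (phi c) x &
        forall c c', (forall x, phi c x = phi c' x) -> c = c'].

End OverC.

Record quiver := Quiver {
  vert : Type;
  arr : Type;
  src : arr -> vert;
  tgt : arr -> vert
}.

Section Paths.
Variable Q : quiver.
(* a path is a start vertex v with a list of arrows a1 ... an, composable
   (src a1 = v, tgt ai = src a(i+1)); the empty list is the trivial path e_v *)
Definition qpath := (vert Q * seq (arr Q))%type.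
Fixpoint valid_from (v : vert Q) (s : seq (arr Q)) : Prop :=
  if s is a :: s' then src a = v /\ valid_from (tgt a) s' else True.
Definition valid_path (p : qpath) := valid_from p.1 p.2.
Definition path_end (v : vert Q) (s : seq (arr Q)) :=
  foldl (fun _ a => tgt a) v s.
(* all decompositions p = x y (x followed by y) *)
Definition decomps (p : qpath) : seq (qpath * qpath) :=
  [seq ((p.1, take i p.2), (path_end p.1 (take i p.2), drop i p.2))
  | i <- iota 0 (size p.2).+1].
Definition discrete := arr Q -> False.
End Paths.

(* (C, cC) is isomorphic, as a coalgebra, to the path coalgebra KQ: the
   isomorphism KQ -> C is given by the images b p of the basis of paths. *)
Definition iso_path_coalg (C : lmodType K) (cC : coalg C) (Q : quiver) :=
  exists b : qpath Q -> C,
    [/\ forall n (e : 'I_n -> qpath Q) (a : 'I_n -> K),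
          injective e -> (forall k, valid_path (e k)) ->
          \sum_(k < n) a k *: b (e k) = 0 -> forall k, a k = 0,
        forall c : C, exists n (e : 'I_n -> qpath Q) (a : 'I_n -> K),
          (forall k, valid_path (e k)) /\ c = \sum_(k < n) a k *: b (e k),
        forall p, valid_path p ->
          teq2 (Delta cC (b p)) [seq (b x.1, b x.2) | x <- decomps p] &
        forall p, valid_path p -> eps cC (b p) = (if p.2 is [::] then 1 else 0)].

End Coalgebras.

From HB Require Import structures.
From mathcomp Require Import all_boot all_order all_algebra zify boolp.
Set Implicit Arguments.
Unset Strict Implicit.
Unset Printing Implicit Defensive.
Import GRing.Theory.
Local Open Scope ring_scope.

(* The trivial paths e_v of the path coalgebra are grouplike, and the paths carry dual
   coordinate functionals delta_p.  If Q has an arrow a : u -> v, then no nonzero H in C^*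
   satisfies f * H = f(e_v) H for all f: at a path p from v compare both sides for
   f = delta_a at a p, and at a path p from w <> v for f = delta_{e_w}.  Since
   f -> e_v = f(e_v) e_v, the components of e_v under an embedding of C (or of the comodule
   K e_v) into a free left C^*-module are such H, so the left qcF conditions fail; the right
   ones fail symmetrically at u.
   If s spans a simple subcoalgebra of the pointed coalgebra C, then f |-> lam f(s) is an
   algebra map on C^*, which cannot vanish on the unit eps - c delta_a (its inverse is the
   geometric series in delta_a); so delta_a kills all simple subcoalgebras while
   delta_a(a) = 1, and C is not cosemisimple.  Conversely, if Q is discrete the paths are a
   basis of grouplikes, c |-> sum_v delta_v(c) delta_v embeds C into C^* on both sides, and
   a finite-dimensional comodule embeds into C^n through the coefficient maps
   m |-> sum th(m_0) m_1 of finitely many separating functionals th. *)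

Section Linearity.
Variables (K : fieldType) (U : lmodType K).
Implicit Types (f : U -> K).

Lemma lin0 (V : lmodType K) (F : U -> V) : lin F -> F 0 = 0.
Proof.
move=> hF; have := hF 1 0 0; rewrite scale1r addr0 scale1r => e.
by apply: (addrI (F 0)); rewrite addr0 -e.
Qed.

Lemma linD (V : lmodType K) (F : U -> V) x y : lin F -> F (x + y) = F x + F y.
Proof. by move=> hF; rewrite -{1}[x]scale1r hF scale1r. Qed.

Lemma linZ (V : lmodType K) (F : U -> V) a x : lin F -> F (a *: x) = a *: F x.
Proof. by move=> hF; rewrite -[a *: x]addr0 hF lin0 // addr0. Qed.

Lemma lin_sum (V : lmodType K) (F : U -> V) (I : Type) (r : seq I) (G : I -> U) :
  lin F -> F (\sum_(i <- r) G i) = \sum_(i <- r) F (G i).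
Proof.
move=> hF; elim: r => [|i r IH]; first by rewrite !big_nil lin0.
by rewrite !big_cons linD // IH.
Qed.

Lemma linfZ f a x : linf f -> f (a *: x) = a * f x.
Proof. exact: (linZ (V := K^o)). Qed.

Lemma linfD f x y : linf f -> f (x + y) = f x + f y.
Proof. exact: (linD (V := K^o)). Qed.

Lemma linf_sum f (I : Type) (r : seq I) (G : I -> U) :
  linf f -> f (\sum_(i <- r) G i) = \sum_(i <- r) f (G i).
Proof. exact: (lin_sum (V := K^o)). Qed.

Lemma linfB f x y : linf f -> f (x - y) = f x - f y.
Proof. by move=> hf; rewrite -scaleN1r linfD // linfZ // mulN1r. Qed.

End Linearity.

Section TensorEvaluation.
Variables (K : fieldType) (U V : lmodType K) (t1 t2 : seq (U * V)).
Hypothesis t12 : teq2 t1 t2.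

Lemma teq2_contract (f : U -> K) (g : V -> K) : linf f -> linf g ->
  \sum_(p <- t1) f p.1 * g p.2 = \sum_(p <- t2) f p.1 * g p.2.
Proof.
move=> hf hg; apply: (@t12 K^o (fun u v => (f u * g v : K^o))); split.
- by move=> v a x y; rewrite /= hf mulrDl -mulrA.
- by move=> u a x y; rewrite /= hg mulrDr mulrCA.
Qed.

Lemma teq2_contract_snd (g : V -> K) : linf g ->
  \sum_(p <- t1) g p.2 *: p.1 = \sum_(p <- t2) g p.2 *: p.1.
Proof.
move=> hg; apply: (@t12 U (fun u v => g v *: u)); split.
- by move=> v a x y; rewrite /= scalerDr !scalerA mulrC.
- by move=> u a x y; rewrite /= hg scalerDl scalerA.
Qed.

Lemma teq2_contract_fst (f : U -> K) : linf f ->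
  \sum_(p <- t1) f p.1 *: p.2 = \sum_(p <- t2) f p.1 *: p.2.
Proof.
move=> hf; apply: (@t12 V (fun u v => f u *: v)); split.
- by move=> v a x y; rewrite /= hf scalerDl scalerA.
- by move=> u a x y; rewrite /= scalerDr !scalerA mulrC.
Qed.

End TensorEvaluation.

Lemma big_partition_undup (R : Type) (idx : R) (op : Monoid.com_law idx)
    (I J : eqType) (r : seq I) (g : I -> J) (F : I -> R) :
  \big[op/idx]_(i <- r) F i =
  \big[op/idx]_(j <- undup (map g r)) \big[op/idx]_(i <- r | g i == j) F i.
Proof.
rewrite (exchange_big_dep xpredT) //=; apply: eq_big_seq => i ri.
rewrite (eq_bigl (pred1 (g i))) => [|j]; last by rewrite eq_sym.
by rewrite -big_filter filter_pred1_uniq ?undup_uniq ?mem_undup ?map_f ?big_seq1.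
Qed.

Section Coordinates.
Variables (K : fieldType) (C : lmodType K) (T : eqType) (P : T -> Prop)
  (b : T -> C).
Hypothesis b_free : forall n (e : 'I_n -> T) (a : 'I_n -> K),
  injective e -> (forall k, P (e k)) ->
  \sum_(k < n) a k *: b (e k) = 0 -> forall k, a k = 0.
Hypothesis b_span : forall c : C, exists n (e : 'I_n -> T) (a : 'I_n -> K),
  (forall k, P (e k)) /\ c = \sum_(k < n) a k *: b (e k).

Local Notation combination l := (\sum_(p <- l) p.1 *: b p.2).
Definition supported (l : seq (K * T)) := {in l, forall p, P p.2}.

Lemma free_uniq (s : seq T) (a : T -> K) : uniq s -> {in s, forall x, P x} ->
  \sum_(x <- s) a x *: b x = 0 -> {in s, forall x, a x = 0}.
Proof.
case: s => [//|x0 s] us Ps s0 x xs.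
have := b_free (e := fun k : 'I_(size (x0 :: s)) => nth x0 (x0 :: s) k)
  (a := fun k => a (nth x0 (x0 :: s) k)).
move/(_ _ _ _ (Ordinal (etrans (index_mem x _) xs))); rewrite /= nth_index //.
apply.
- by move=> i j /(uniqP x0 us); rewrite !inE => /(_ (ltn_ord i) (ltn_ord j))/val_inj.
- by move=> k; apply: Ps; rewrite mem_nth.
- by rewrite -{}[RHS]s0 [RHS](big_nth x0) big_mkord.
Qed.

Definition group_coef (l : seq (K * T)) (x : T) := \sum_(p <- l | p.2 == x) p.1.

Lemma big_group_coef (W : lmodType K) (l : seq (K * T)) (G : T -> W) :
  \sum_(p <- l) p.1 *: G p.2 =
  \sum_(x <- undup (map snd l)) group_coef l x *: G x.
Proof.
rewrite (big_partition_undup _ _ snd); apply: eq_bigr => x _.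
by rewrite scaler_suml; apply: eq_bigr => p /eqP ->.
Qed.

Lemma combination_eq0 (l : seq (K * T)) (u : T -> K) : supported l ->
  combination l = 0 -> \sum_(p <- l) p.1 * u p.2 = 0.
Proof.
move=> Pl; rewrite big_group_coef => /free_uniq coef0.
rewrite (big_group_coef (W := K^o)) big1_seq // => x /andP[_ xl].
rewrite coef0 ?undup_uniq ?scale0r // => y; rewrite mem_undup => /mapP[p lp ->].
exact: Pl.
Qed.

Lemma supported_span c : exists l, supported l /\ c = combination l.
Proof.
have [n [e [a [Pe ->]]]] := b_span c.
exists [seq (a k, e k) | k <- index_enum 'I_n]; split; last by rewrite big_map.
by move=> _ /mapP[k _ ->]; exact: Pe.
Qed.

Definition coord_rep (c : C) : seq (K * T) := sval (cid (supported_span c)).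

Lemma coord_repP c : supported (coord_rep c) /\ c = combination (coord_rep c).
Proof. exact: svalP (cid (supported_span c)). Qed.

Definition coord_ext (u : T -> K) (c : C) : K :=
  \sum_(p <- coord_rep c) p.1 * u p.2.

Lemma combination_neg (W : lmodType K) (l : seq (K * T)) (G : T -> W) :
  \sum_(p <- [seq (- p.1, p.2) | p <- l]) p.1 *: G p.2 = - \sum_(p <- l) p.1 *: G p.2.
Proof. by rewrite big_map -sumrN; apply: eq_bigr => p _; rewrite scaleNr. Qed.

Lemma coord_extE u c l : supported l -> c = combination l ->
  coord_ext u c = \sum_(p <- l) p.1 * u p.2.
Proof.
have [Prep crep] := coord_repP c => Pl cl; apply/eqP; rewrite -subr_eq0; apply/eqP.
have := @combination_eq0 (coord_rep c ++ [seq (- p.1, p.2) | p <- l]) u.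
rewrite !big_cat /= combination_neg (combination_neg (W := K^o)) -crep -cl subrr.
by apply=> // p; rewrite mem_cat => /orP[/Prep //|/mapP[q /Pl ? ->]].
Qed.

Lemma coord_ext_lin u : linf (coord_ext u).
Proof.
move=> a x y; have [Px ex] := coord_repP x; have [Py ey] := coord_repP y.
rewrite (@coord_extE _ _ ([seq (a * p.1, p.2) | p <- coord_rep x] ++ coord_rep y)).
- rewrite big_cat big_map /= /coord_ext mulr_sumr; congr (_ + _).
  by apply: eq_bigr => p _; rewrite mulrA.
- by move=> p; rewrite mem_cat => /orP[/mapP[q /Px ? ->]|/Py].
- rewrite big_cat big_map /= -ey {1}ex scaler_sumr; congr (_ + _).
  by apply: eq_bigr => p _; rewrite scalerA.
Qed.

Lemma coord_ext_basis u x : P x -> coord_ext u (b x) = u x.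
Proof.
move=> Px; rewrite (@coord_extE _ _ [:: (1, x)]) ?big_seq1 ?mul1r ?scale1r //.
by move=> p; rewrite inE => /eqP ->.
Qed.

Lemma linf_basis_eq (f g : C -> K) : linf f -> linf g ->
  (forall x, P x -> f (b x) = g (b x)) -> forall c, f c = g c.
Proof.
move=> hf hg fg c; have [n [e [a [Pe ->]]]] := b_span c.
by rewrite !linf_sum //; apply: eq_bigr => k _; rewrite !linfZ // fg.
Qed.

Lemma linf_basis_eq0 (f : C -> K) : linf f ->
  (forall x, P x -> f (b x) = 0) -> forall c, f c = 0.
Proof.
move=> hf f0; apply: (@linf_basis_eq _ (fun=> 0) hf) => [a x y|]; last exact: f0.
by rewrite mulr0 addr0.
Qed.

Lemma basis_neq0 x : P x -> b x != 0.
Proof.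
move=> Px; apply/eqP => bx0; have : (1 : K) = 0.
  apply: (b_free (e := fun _ : 'I_1 => x) (a := fun _ => 1) _ _ _ ord0) => //.
  - by move=> i j _; rewrite (ord1 i) (ord1 j).
  - by rewrite big_ord1 bx0 scaler0.
by move/eqP; rewrite oner_eq0.
Qed.

Definition coord (x : T) : C -> K := coord_ext (fun y => (y == x)%:R).

Lemma coord_eq0 c : (forall x, P x -> coord x c = 0) -> c = 0.
Proof.
move=> c0; have [Prep ->] := coord_repP c; rewrite big_group_coef big1_seq //.
move=> x /andP[_]; rewrite mem_undup => /mapP[p /Prep Pp ->].
suff -> : group_coef (coord_rep c) p.2 = coord p.2 c by rewrite c0 ?scale0r.
rewrite /coord /coord_ext /group_coef big_mkcond; apply: eq_bigr => q _.
by case: eqP; rewrite ?mulr1 ?mulr0.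
Qed.

End Coordinates.

Section CoalgebraFacts.
Variables (K : fieldType) (C : lmodType K) (cC : coalg C).
Local Notation D := (Delta cC).

Lemma Delta0 (W : lmodType K) (be : C -> C -> W) : bilin be ->
  \sum_(p <- D 0) be p.1 p.2 = 0.
Proof.
move=> hb; have := Delta_lin cC 1 0 0 hb; rewrite scale1r addr0 big_cat big_map /=.
under [X in _ = X + _]eq_bigr do rewrite scale1r.
by move=> e; apply: (addrI (\sum_(p <- D 0) be p.1 p.2)); rewrite addr0 -e.
Qed.

Lemma Delta_scale_grouplike (a : K) (g : C) : teq2 (D g) [:: (g, g)] ->
  teq2 (D (a *: g)) [:: (a *: g, g)].
Proof.
move=> Dg W be hb; have [hb1 _] := hb.
have := Delta_lin cC a g 0 hb; rewrite addr0 => ->.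
rewrite big_cat /= Delta0 // addr0 big_map /=.
under eq_bigr do rewrite (linZ _ _ (hb1 _)).
by rewrite -scaler_sumr (Dg W be hb) !big_seq1 (linZ _ _ (hb1 _)).
Qed.

Lemma cmul_lin f g : linf f -> linf g -> linf (cmul cC f g).
Proof.
move=> hf hg a x y; rewrite /cmul (teq2_contract (Delta_lin cC a x y)) //.
rewrite big_cat big_map /= mulr_sumr; congr (_ + _).
by apply: eq_bigr => p _; rewrite linfZ // mulrA.
Qed.

Lemma C_lact_lin f : linf f -> lin (C_lact cC f).
Proof.
move=> hf a x y; rewrite /C_lact (teq2_contract_snd (Delta_lin cC a x y)) //.
rewrite big_cat big_map /= scaler_sumr; congr (_ + _).
by apply: eq_bigr => p _; rewrite !scalerA mulrC.
Qed.

Lemma C_ract_lin f : linf f -> lin (C_ract cC ^~ f).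
Proof.
move=> hf a x y; rewrite /C_ract (teq2_contract_fst (Delta_lin cC a x y)) //.
rewrite big_cat big_map /= scaler_sumr; congr (_ + _).
by apply: eq_bigr => p _; rewrite linfZ // -scalerA.
Qed.

Lemma cmul_eps_l f : linf f -> forall y, cmul cC (eps cC) f y = f y.
Proof.
move=> hf y; rewrite -{2}(counitl cC y) linf_sum //.
by apply: eq_bigr => p _; rewrite linfZ.
Qed.

Lemma one_dim_subcoalg_multiplicative (P : C -> Prop) (s : C) : subcoalg cC P ->
  (forall d, P d <-> exists a : K, d = a *: s) ->
  exists lam : K, forall f g, linf f -> linf g -> cmul cC f g s = lam * (f s * g s).
Proof.
move=> [_ Dsub] Ps; have [t [tP Dt]] := Dsub s ((Ps s).2 (ex_intro _ 1 (esym (scale1r s)))).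
suff [lam tE] : exists lam : K, forall f g, linf f -> linf g ->
    \sum_(p <- t) f p.1 * g p.2 = lam * (f s * g s).
  by exists lam => f g hf hg; rewrite /cmul (teq2_contract Dt) // tE.
elim: t tP {Dt} => [|p t IH] tP; first by exists 0 => f g _ _; rewrite big_nil mul0r.
have [|lam tE] := IH; first by move=> q tq; apply: tP; rewrite inE tq orbT.
have [/(Ps _).1[al p1] /(Ps _).1[be p2]] := tP p (mem_head _ _).
exists (al * be + lam) => f g hf hg; rewrite big_cons tE // p1 p2 !linfZ //.
by rewrite mulrDl mulrACA.
Qed.

Section Grouplike.
Variable g : C.
Hypothesis Dg : teq2 (D g) [:: (g, g)].

Lemma cmul_grouplike f h : linf f -> linf h -> cmul cC f h g = f g * h g.
Proof. by move=> hf hh; rewrite /cmul (teq2_contract Dg) // big_seq1. Qed.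

Lemma C_lact_grouplike f : linf f -> C_lact cC f g = f g *: g.
Proof. by move=> hf; rewrite /C_lact (teq2_contract_snd Dg) // big_seq1. Qed.

Lemma C_ract_grouplike f : linf f -> C_ract cC g f = f g *: g.
Proof. by move=> hf; rewrite /C_ract (teq2_contract_fst Dg) // big_seq1. Qed.

End Grouplike.

Definition left_eigen (h : C) (H : C -> K) :=
  forall f, linf f -> forall y, cmul cC f H y = f h * H y.
Definition right_eigen (h : C) (H : C -> K) :=
  forall f, linf f -> forall y, cmul cC H f y = f h * H y.

Lemma embeds_free_left_eigen (M : lmodType K) (act : (C -> K) -> M -> M)
    (h : C) (m : M) :
  embeds_free_left cC act -> (forall f, linf f -> act f m = f h *: m) ->
  (forall H, linf H -> left_eigen h H -> forall y, H y = 0) -> m = 0.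
Proof.
move=> [I [phi [phi_lin _ phi_add phi_act phi_inj]]] act_m eigen0.
have phi0 i x : phi 0 i x = 0.
  have := phi_add 1 0 0 i x; rewrite scale1r addr0 mul1r => e.
  by apply: (addrI (phi 0 i x)); rewrite addr0 -e.
apply: phi_inj => i x; rewrite phi0; apply: eigen0 => [|f hf y]; first exact: phi_lin.
rewrite -(phi_act _ _ _ _ hf) (act_m _ hf); have := phi_add (f h) m 0 i y.
by rewrite addr0 phi0 addr0.
Qed.

Lemma embeds_free_right_eigen (M : lmodType K) (act : M -> (C -> K) -> M)
    (h : C) (m : M) :
  embeds_free_right cC act -> (forall f, linf f -> act m f = f h *: m) ->
  (forall H, linf H -> right_eigen h H -> forall y, H y = 0) -> m = 0.
Proof.
move=> [I [phi [phi_lin _ phi_add phi_act phi_inj]]] act_m eigen0.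
have phi0 i x : phi 0 i x = 0.
  have := phi_add 1 0 0 i x; rewrite scale1r addr0 mul1r => e.
  by apply: (addrI (phi 0 i x)); rewrite addr0 -e.
apply: phi_inj => i x; rewrite phi0; apply: eigen0 => [|f hf y]; first exact: phi_lin.
rewrite -(phi_act _ _ _ _ hf) (act_m _ hf); have := phi_add (f h) m 0 i y.
by rewrite addr0 phi0 addr0.
Qed.

End CoalgebraFacts.

Section FiniteDimensional.
Variables (K : fieldType) (M : lmodType K).

Definition spans n (v : 'I_n -> M) :=
  forall m, exists a : 'I_n -> K, m = \sum_(k < n) a k *: v k.

Lemma minimal_spanning_free n (v : 'I_n -> M) : spans v ->
  (forall n' (v' : 'I_n' -> M), spans v' -> (n <= n')%N) ->
  forall a : 'I_n -> K, \sum_(k < n) a k *: v k = 0 -> forall k, a k = 0.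
Proof.
case: n v => [|n] v span minimal a a0 j; first by case: j.
apply: contrapT => /eqP aj.
suff /minimal : spans (v \o lift j) by rewrite ltnn.
move=> m; have [c ->] := span m.
exists (fun k => c (lift j k) - c j / a j * a (lift j k)).
have -> : \sum_(k < n.+1) c k *: v k = \sum_(k < n.+1) (c k - c j / a j * a k) *: v k.
  under [RHS]eq_bigr do rewrite scalerBl -scalerA.
  by rewrite sumrB -scaler_sumr a0 scaler0 subr0.
by rewrite (bigD1_ord j) //= divfK // subrr scale0r add0r.
Qed.

Lemma findim_separating : findim M ->
  exists n (th : 'I_n -> M -> K),
    (forall k, linf (th k)) /\ (forall m, (forall k, th k m = 0) -> m = 0).
Proof.
move=> [n0 [v0 span0]].
pose spanning n := `[< exists v : 'I_n -> M, spans v >].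
have ex_spanning : exists n, spanning n by exists n0; apply/asboolP; exists v0.
case: (ex_minnP ex_spanning) => n /asboolP[v span] minimal.
have free := minimal_spanning_free span (fun n' v' sp' => minimal n' (asboolT (ex_intro _ v' sp'))).
pose th k m := sval (cid (span m)) k.
have thE m : m = \sum_(k < n) th k m *: v k by rewrite /th; case: cid.
have th_uniq m (a : 'I_n -> K) : m = \sum_(k < n) a k *: v k -> forall k, th k m = a k.
  move=> ma k; apply/eqP; rewrite -subr_eq0; apply/eqP; move: k; apply: free.
  by under eq_bigr do rewrite scalerBl; rewrite sumrB -thE -ma subrr.
exists n, th; split=> [j a x y|m th0]; last by rewrite (thE m) big1 // => k _; rewrite th0 scale0r.
rewrite (th_uniq _ (fun i => a * th i x + th i y)) // {1}(thE x) {1}(thE y).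
rewrite scaler_sumr -big_split; apply: eq_bigr => k _.
by rewrite scalerDl scalerA.
Qed.

End FiniteDimensional.

Section CoefficientMaps.
Variables (K : fieldType) (C : lmodType K) (cC : coalg C).

Definition rc_coeff (M : rcomod cC) (th : rc_sort M -> K) (m : rc_sort M) : C :=
  \sum_(p <- rc_rho m) th p.1 *: p.2.
Definition lc_coeff (M : lcomod cC) (th : lc_sort M -> K) (m : lc_sort M) : C :=
  \sum_(p <- lc_rho m) th p.2 *: p.1.

Variables (M : rcomod cC) (N : lcomod cC).

Lemma rc_coeff_lin (th : rc_sort M -> K) : linf th -> lin (rc_coeff th).
Proof.
move=> hth a x y; rewrite /rc_coeff (teq2_contract_fst (rc_rho_lin a x y)) //.
rewrite big_cat big_map /= scaler_sumr; congr (_ + _).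
by apply: eq_bigr => p _; rewrite linfZ // scalerA.
Qed.

Lemma lc_coeff_lin (th : lc_sort N -> K) : linf th -> lin (lc_coeff th).
Proof.
move=> hth a x y; rewrite /lc_coeff (teq2_contract_snd (lc_rho_lin a x y)) //.
rewrite big_cat big_map /= scaler_sumr; congr (_ + _).
by apply: eq_bigr => p _; rewrite linfZ // scalerA.
Qed.

Lemma eps_rc_coeff (th : rc_sort M -> K) m : linf th -> eps cC (rc_coeff th m) = th m.
Proof.
move=> hth; rewrite /rc_coeff (linf_sum _ _ (eps_lin cC)).
rewrite -{2}(rc_counit m) (linf_sum _ _ hth); apply: eq_bigr => p _.
by rewrite (linfZ _ _ (eps_lin cC)) linfZ // mulrC.
Qed.

Lemma eps_lc_coeff (th : lc_sort N -> K) m : linf th -> eps cC (lc_coeff th m) = th m.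
Proof.
move=> hth; rewrite /lc_coeff (linf_sum _ _ (eps_lin cC)).
rewrite -{2}(lc_counit m) (linf_sum _ _ hth); apply: eq_bigr => p _.
by rewrite (linfZ _ _ (eps_lin cC)) linfZ // mulrC.
Qed.

(* contract both sides of the coassociativity identity for [m] with [th (x) id (x) f] *)
Lemma rc_coeff_lact (th : rc_sort M -> K) f m : linf th -> linf f ->
  rc_coeff th (rc_lact f m) = C_lact cC f (rc_coeff th m).
Proof.
move=> hth hf.
have tri : trilin (fun (x : rc_sort M) (c d : C) => (th x * f d) *: c).
  split.
  - by move=> c d a x y; rewrite hth mulrDl scalerDl -mulrA scalerA.
  - by move=> x d a c c'; rewrite scalerDr !scalerA [_ * a]mulrC.
  - by move=> x c a d d'; rewrite hf mulrDr scalerDl mulrCA scalerA.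
have := rc_coassoc m tri; rewrite !big_flatten /= !big_map /=.
rewrite /rc_lact (lin_sum _ _ (rc_coeff_lin hth)) (lin_sum _ _ (C_lact_lin cC hf)).
move=> coassoc; apply: etrans (etrans _ coassoc) _; apply: eq_bigr => p _.
- rewrite (linZ _ _ (rc_coeff_lin hth)) big_map /rc_coeff scaler_sumr.
  by apply: eq_bigr => q _; rewrite scalerA mulrC.
- rewrite big_map (linZ _ _ (C_lact_lin cC hf)) /C_lact scaler_sumr.
  by apply: eq_bigr => q _; rewrite scalerA.
Qed.

Lemma lc_coeff_ract (th : lc_sort N -> K) f m : linf th -> linf f ->
  lc_coeff th (lc_ract m f) = C_ract cC (lc_coeff th m) f.
Proof.
move=> hth hf.
have tri : trilin (fun (c d : C) (x : lc_sort N) => (f c * th x) *: d).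
  split.
  - by move=> d x a c c'; rewrite hf mulrDl scalerDl -mulrA scalerA.
  - by move=> c x a d d'; rewrite scalerDr !scalerA [_ * a]mulrC.
  - by move=> c d a x y; rewrite hth mulrDr scalerDl mulrCA scalerA.
have := lc_coassoc m tri; rewrite !big_flatten /= !big_map /=.
rewrite /lc_ract (lin_sum _ _ (lc_coeff_lin hth)) (lin_sum _ _ (C_ract_lin cC hf)).
move=> coassoc; apply: etrans (etrans _ (esym coassoc)) _; apply: eq_bigr => p _.
- rewrite (linZ _ _ (lc_coeff_lin hth)) big_map /lc_coeff scaler_sumr.
  by apply: eq_bigr => q _; rewrite scalerA.
- rewrite big_map (linZ _ _ (C_ract_lin cC hf)) /C_ract scaler_sumr.
  by apply: eq_bigr => q _; rewrite scalerA mulrC.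
Qed.

End CoefficientMaps.

Section CoFrobenius.
Variables (K : fieldType) (C : lmodType K) (cC : coalg C).

Definition right_coFrobenius :=
  exists phi : C -> C -> K,
    [/\ forall c, linf (phi c),
        forall (a : K) c c' x, phi (a *: c + c') x = a * phi c x + phi c' x,
        forall f c x, linf f -> phi (C_ract cC c f) x = cmul cC (phi c) f x &
        forall c c', (forall x, phi c x = phi c' x) -> c = c'].

Lemma coFrobenius_left_qcF : coFrobenius cC -> left_qcF cC.
Proof.
move=> [phi [phi_lin phi_add phi_act phi_inj]]; exists unit, (fun c _ => phi c).
split.
- by move=> c _; exact: phi_lin.
- by move=> c; exists 1%N, (fun _ => tt) => -[] /(_ ord0).
- by move=> a c c' _ x; exact: phi_add.
- by move=> f c _ x; exact: phi_act.
- by move=> c c' eq_cc'; apply: phi_inj => x; exact: eq_cc' tt x.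
Qed.

Lemma right_coFrobenius_right_qcF : right_coFrobenius -> right_qcF cC.
Proof.
move=> [phi [phi_lin phi_add phi_act phi_inj]]; exists unit, (fun c _ => phi c).
split.
- by move=> c _; exact: phi_lin.
- by move=> c; exists 1%N, (fun _ => tt) => -[] /(_ ord0).
- by move=> a c c' _ x; exact: phi_add.
- by move=> f c _ x; exact: phi_act.
- by move=> c c' eq_cc'; apply: phi_inj => x; exact: eq_cc' tt x.
Qed.

Lemma coFrobenius_left_fqcF : coFrobenius cC -> left_fqcF cC.
Proof.
move=> [phi [phi_lin phi_add phi_act phi_inj]] M /findim_separating[n [th [th_lin th_sep]]].
exists 'I_n, (fun m k => phi (rc_coeff (th k) m)); split.
- by move=> m k; exact: phi_lin.
- by move=> m; exists n, id => k /(_ k).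
- by move=> a m m' k x; rewrite (rc_coeff_lin (th_lin k)) phi_add.
- by move=> f m k x hf; rewrite (rc_coeff_lact _ (th_lin k) hf) phi_act.
move=> m m' eq_mm'; apply/eqP; rewrite -subr_eq0; apply/eqP; apply: th_sep => k.
rewrite linfB // -!(eps_rc_coeff _ (th_lin k)).
by rewrite (phi_inj _ _ (eq_mm' k)) subrr.
Qed.

Lemma right_coFrobenius_right_fqcF : right_coFrobenius -> right_fqcF cC.
Proof.
move=> [phi [phi_lin phi_add phi_act phi_inj]] N /findim_separating[n [th [th_lin th_sep]]].
exists 'I_n, (fun m k => phi (lc_coeff (th k) m)); split.
- by move=> m k; exact: phi_lin.
- by move=> m; exists n, id => k /(_ k).
- by move=> a m m' k x; rewrite (lc_coeff_lin (th_lin k)) phi_add.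
- by move=> f m k x hf; rewrite (lc_coeff_ract _ (th_lin k) hf) phi_act.
move=> m m' eq_mm'; apply/eqP; rewrite -subr_eq0; apply/eqP; apply: th_sep => k.
rewrite linfB // -!(eps_lc_coeff _ (th_lin k)).
by rewrite (phi_inj _ _ (eq_mm' k)) subrr.
Qed.

End CoFrobenius.

Section GrouplikeComodules.
Variables (K : fieldType) (C : lmodType K) (cC : coalg C) (h : C).
Hypotheses (Dh : teq2 (Delta cC h) [:: (h, h)]) (eps_h : eps cC h = 1).

Definition grouplike_coaction_r (t : K^o) : seq (K^o * C) := [:: (t, h)].
Definition grouplike_coaction_l (t : K^o) : seq (C * K^o) := [:: (h, t)].

Lemma grouplike_coaction_r_lin (a : K) (x y : K^o) :
  teq2 (grouplike_coaction_r (a *: x + y))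
    ([seq (a *: p.1, p.2) | p <- grouplike_coaction_r x] ++ grouplike_coaction_r y).
Proof.
move=> W be [hb1 _]; rewrite /= !big_cons !big_nil /=.
by rewrite (hb1 h) (linZ _ _ (hb1 h)) !addr0.
Qed.

Lemma grouplike_coaction_l_lin (a : K) (x y : K^o) :
  teq2 (grouplike_coaction_l (a *: x + y))
    ([seq (p.1, a *: p.2) | p <- grouplike_coaction_l x] ++ grouplike_coaction_l y).
Proof.
move=> W be [_ hb2]; rewrite /= !big_cons !big_nil /=.
by rewrite (hb2 h) (linZ _ _ (hb2 h)) !addr0.
Qed.

Lemma grouplike_coaction_r_coassoc (m : K^o) :
  teq3 (flatten [seq [seq (q.1, q.2, p.2) | q <- grouplike_coaction_r p.1]
                | p <- grouplike_coaction_r m])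
       (flatten [seq [seq (p.1, q.1, q.2) | q <- Delta cC p.2]
                | p <- grouplike_coaction_r m]).
Proof.
move=> W ga [_ ga2 ga3]; rewrite /= cats0 big_map big_seq1 /=.
by rewrite (@Dh _ (ga m)) ?big_seq1.
Qed.

Lemma grouplike_coaction_l_coassoc (m : K^o) :
  teq3 (flatten [seq [seq (q.1, q.2, p.2) | q <- Delta cC p.1]
                | p <- grouplike_coaction_l m])
       (flatten [seq [seq (p.1, q.1, q.2) | q <- grouplike_coaction_l p.2]
                | p <- grouplike_coaction_l m]).
Proof.
move=> W ga [ga1 ga2 _]; rewrite /= cats0 big_map big_seq1 /=.
by rewrite (@Dh _ (fun c d => ga c d m)) ?big_seq1.
Qed.

Lemma grouplike_coaction_r_counit (m : K^o) :
  \sum_(p <- grouplike_coaction_r m) eps cC p.2 *: p.1 = m.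
Proof. by rewrite big_seq1 eps_h scale1r. Qed.

Lemma grouplike_coaction_l_counit (m : K^o) :
  \sum_(p <- grouplike_coaction_l m) eps cC p.1 *: p.2 = m.
Proof. by rewrite big_seq1 eps_h scale1r. Qed.

Definition grouplike_rcomod : rcomod cC := RComod grouplike_coaction_r_lin
  grouplike_coaction_r_coassoc grouplike_coaction_r_counit.
Definition grouplike_lcomod : lcomod cC := LComod grouplike_coaction_l_lin
  grouplike_coaction_l_coassoc grouplike_coaction_l_counit.

End GrouplikeComodules.

Lemma findim_regular (K : fieldType) : findim (K^o).
Proof. by exists 1%N, (fun _ => 1) => m; exists (fun _ => m); rewrite big_ord1 [_ *: _]mulr1. Qed.

Section GrouplikeBasis.
Variables (K : fieldType) (C : lmodType K) (cC : coalg C) (T : eqType) (b : T -> C).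
Hypothesis b_free : forall n (e : 'I_n -> T) (a : 'I_n -> K),
  injective e -> \sum_(k < n) a k *: b (e k) = 0 -> forall k, a k = 0.
Hypothesis b_span : forall c : C, exists n (e : 'I_n -> T) (a : 'I_n -> K),
  c = \sum_(k < n) a k *: b (e k).
Hypothesis b_grouplike : forall t, teq2 (Delta cC (b t)) [:: (b t, b t)].

Let unconstrained (t : T) := True.

Let b_free' n (e : 'I_n -> T) (a : 'I_n -> K) : injective e -> (forall k, unconstrained (e k)) ->
  \sum_(k < n) a k *: b (e k) = 0 -> forall k, a k = 0.
Proof. by move=> inj_e _; exact: b_free. Qed.

Let b_span' c : exists n (e : 'I_n -> T) (a : 'I_n -> K),
  (forall k, unconstrained (e k)) /\ c = \sum_(k < n) a k *: b (e k).
Proof. by have [n [e [a ->]]] := b_span c; exists n, e, a. Qed.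

Local Notation coord := (coord b_span').

Lemma coord_lin r : linf (coord r).
Proof. exact: coord_ext_lin. Qed.

Lemma coord_basis r t : coord r (b t) = (t == r)%:R.
Proof. exact: coord_ext_basis. Qed.

Lemma coord_eigen r (A : C -> C) (f : C -> K) : lin A ->
  (forall t, A (b t) = f (b t) *: b t) -> forall c, coord r (A c) = f (b r) * coord r c.
Proof.
move=> linA Ab; apply: (linf_basis_eq b_span') => [a x y|a x y|t _].
- by rewrite linA coord_lin.
- by rewrite coord_lin mulrCA mulrDr.
rewrite Ab (linfZ _ _ (coord_lin r)) !coord_basis.
by case: eqP => [->|]; rewrite ?mulr0.
Qed.

Definition dual_embedding (c : C) : C -> K := coord_ext b_span' (coord ^~ c).

Lemma dual_embedding_lin c : linf (dual_embedding c).
Proof. exact: coord_ext_lin. Qed.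

Lemma dual_embedding_basis c t : dual_embedding c (b t) = coord t c.
Proof. exact: coord_ext_basis. Qed.

Lemma dual_embedding_add (a : K) c c' y :
  dual_embedding (a *: c + c') y = a * dual_embedding c y + dual_embedding c' y.
Proof.
rewrite /dual_embedding /coord_ext mulr_sumr -big_split; apply: eq_bigr => p _ /=.
by rewrite coord_lin mulrDr mulrCA.
Qed.

Lemma dual_embedding_inj c c' :
  (forall y, dual_embedding c y = dual_embedding c' y) -> c = c'.
Proof.
move=> eq_cc'; apply/eqP; rewrite -subr_eq0; apply/eqP.
apply: (coord_eq0 (b_span := b_span')) => t _.
by rewrite (linfB _ _ (coord_lin t)) -!dual_embedding_basis eq_cc' subrr.
Qed.

Lemma dual_embedding_lact f c y : linf f ->
  dual_embedding (C_lact cC f c) y = cmul cC f (dual_embedding c) y.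
Proof.
move=> hf; apply: (linf_basis_eq b_span') y => [||t _].
- exact: dual_embedding_lin.
- exact: cmul_lin (dual_embedding_lin c).
rewrite (cmul_grouplike (b_grouplike t) hf (dual_embedding_lin c)) !dual_embedding_basis.
by apply: (coord_eigen _ (C_lact_lin _ hf)) => s; exact: C_lact_grouplike.
Qed.

Lemma dual_embedding_ract f c y : linf f ->
  dual_embedding (C_ract cC c f) y = cmul cC (dual_embedding c) f y.
Proof.
move=> hf; apply: (linf_basis_eq b_span') y => [||t _].
- exact: dual_embedding_lin.
- exact: cmul_lin (dual_embedding_lin c) hf.
rewrite (cmul_grouplike (b_grouplike t) (dual_embedding_lin c) hf) !dual_embedding_basis mulrC.
by apply: (coord_eigen _ (C_ract_lin _ hf)) => s; exact: C_ract_grouplike.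
Qed.

Lemma grouplike_basis_coFrobenius : coFrobenius cC.
Proof.
exists dual_embedding; split.
- exact: dual_embedding_lin.
- exact: dual_embedding_add.
- by move=> f c x; exact: dual_embedding_lact.
- exact: dual_embedding_inj.
Qed.

Lemma grouplike_basis_right_coFrobenius : right_coFrobenius cC.
Proof.
exists dual_embedding; split.
- exact: dual_embedding_lin.
- exact: dual_embedding_add.
- by move=> f c x; exact: dual_embedding_ract.
- exact: dual_embedding_inj.
Qed.

Definition basis_line (t : T) (c : C) := exists a : K, c = a *: b t.

Lemma basis_line_simple t : simple_subcoalg cC (basis_line t).
Proof.
split.
- split; first split.
  + by exists 0; rewrite scale0r.
  + by move=> a x y [al ->] [be ->]; exists (a * al + be); rewrite scalerDl scalerA.
  move=> d [al ->]; exists [:: (al *: b t, b t)]; split; last exact: Delta_scale_grouplike.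
  by move=> p; rewrite inE => /eqP -> /=; split; [exists al|exists 1; rewrite scale1r].
- by exists (b t); split; [exists 1; rewrite scale1r | exact: (basis_neq0 b_free')].
move=> E [[E0 E_lin] _] sub_Et.
case: (pselect (exists2 x, E x & x <> 0)) => [[x Ex x0]|]; last first.
  by move=> noE; left=> x Ex; apply: contrapT => x0; apply: noE; exists x.
right=> _ [be ->]; have [al xE] := sub_Et x Ex.
have al0 : al != 0 by apply: contra_notN x0 => /eqP al0; rewrite xE al0 scale0r.
have -> : be *: b t = (be / al) *: x + 0 by rewrite addr0 xE scalerA divfK.
exact: E_lin.
Qed.

Lemma grouplike_basis_cosemisimple : cosemisimple cC.
Proof.
exists T, basis_line; split.
- exact: basis_line_simple.
- move=> c; have [n [e [a ->]]] := b_span c.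
  by exists n, e, (fun k => a k *: b (e k)); split=> // k; exists (a k).
move=> n e d inj_e d_line sum0 k.
have [a da] : exists a : 'I_n -> K, forall k, d k = a k *: b (e k).
  by exists (fun k => sval (cid (d_line k))) => j; case: cid.
rewrite da (b_free inj_e _ k) ?scale0r //.
by rewrite -{}[RHS]sum0; apply: eq_bigr => j _; rewrite da.
Qed.

End GrouplikeBasis.

Section Paths.
Variable Q : quiver.
Implicit Types (u : vert Q) (s : seq (arr Q)).

Lemma decomps_head u s :
  decomps (u, s) = ((u, [::]), (u, s)) ::
   [seq ((u, take i.+1 s), (path_end u (take i.+1 s), drop i.+1 s)) | i <- iota 0 (size s)].
Proof.
rewrite /decomps /= take0 drop0; congr (_ :: _).
by rewrite -[1%N]/(1 + 0)%N iotaDl -map_comp.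
Qed.

Lemma decomps_last u s :
  decomps (u, s) =
   [seq ((u, take i s), (path_end u (take i s), drop i s)) | i <- iota 0 (size s)]
   ++ [:: ((u, s), (path_end u s, [::]))].
Proof. by rewrite /decomps -addn1 iotaD map_cat /= take_size drop_size. Qed.

Lemma decomps_rcons u s a :
  decomps (u, rcons s a) =
   [seq ((u, take i s), (path_end u (take i s), rcons (drop i s) a)) | i <- iota 0 (size s)]
   ++ [:: ((u, s), (path_end u s, [:: a])); ((u, rcons s a), (path_end u (rcons s a), [::]))].
Proof.
rewrite decomps_last size_rcons -addn1 iotaD map_cat -catA /=.
rewrite -cats1 add0n drop_size_cat // take_size_cat //; congr (_ ++ _).
apply/eq_in_map => i; rewrite mem_iota add0n => hi.
by rewrite takel_cat ?(ltnW hi) // drop_cat; case: ifP hi => // _ _; rewrite cats1.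
Qed.

Lemma valid_take_drop u s i : valid_from u s ->
  valid_from u (take i s) /\ valid_from (path_end u (take i s)) (drop i s).
Proof.
elim: s u i => [|a s IH] u [|i] //= [au vs]; split=> //; by case: (IH (tgt a) i vs).
Qed.

Lemma valid_rcons u s a :
  valid_from u s -> src a = path_end u s -> valid_from u (rcons s a).
Proof.
elim: s u => [|a' s IH] u /=; first by move=> _ ->.
by move=> [au vs] sa; split=> //; apply: IH.
Qed.

End Paths.

Section PathCoalgebra.
Variables (K : fieldType) (C : lmodType K) (cC : coalg C) (Q : quiver).
(* paths with a classical decidable equality, so that they can index coordinates *)
Local Notation path := {classic (qpath Q)}.
Variable b : path -> C.
Hypothesis b_free : forall n (e : 'I_n -> path) (a : 'I_n -> K),
  injective e -> (forall k, valid_path (e k)) ->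
  \sum_(k < n) a k *: b (e k) = 0 -> forall k, a k = 0.
Hypothesis b_span : forall c : C, exists n (e : 'I_n -> path) (a : 'I_n -> K),
  (forall k, valid_path (e k)) /\ c = \sum_(k < n) a k *: b (e k).
Hypothesis b_Delta : forall p : path, valid_path p ->
  teq2 (Delta cC (b p)) [seq (b x.1, b x.2) | x <- decomps p].
Hypothesis b_eps : forall p : path, valid_path p ->
  eps cC (b p) = (if p.2 is [::] then 1 else 0).

Local Notation delta := (coord b_span).
Local Notation vertex v := (b (v, [::])).

Lemma delta_lin (r : path) : linf (delta r).
Proof. exact: coord_ext_lin. Qed.

Lemma delta_basis (r p : path) : valid_path p -> delta r (b p) = (p == r)%:R.
Proof. exact: coord_ext_basis. Qed.

Lemma delta_basis_size (r p : path) : valid_path p -> size p.2 != size r.2 ->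
  delta r (b p) = 0.
Proof.
move=> vp sz; rewrite delta_basis // (_ : (p == r) = false) //.
by apply: contraNF sz => /eqP ->.
Qed.

Lemma vertex_grouplike v : teq2 (Delta cC (vertex v)) [:: (vertex v, vertex v)].
Proof. exact: (b_Delta (p := (v, [::]))). Qed.

Lemma vertex_neq0 v : vertex v != 0.
Proof. exact: (basis_neq0 b_free (x := (v, [::]))). Qed.

Lemma cmul_basis f g (p : path) : linf f -> linf g -> valid_path p ->
  cmul cC f g (b p) = \sum_(q <- decomps p) f (b q.1) * g (b q.2).
Proof. by move=> hf hg vp; rewrite /cmul (teq2_contract (b_Delta vp)) // big_map. Qed.

Lemma cmul_delta_vertex_l (H : C -> K) u s : linf H -> valid_path ((u, s) : path) ->
  cmul cC (delta (u, [::])) H (b (u, s)) = H (b (u, s)).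
Proof.
move=> hH vp; rewrite (cmul_basis (delta_lin _) hH vp) decomps_head big_cons.
rewrite delta_basis // eqxx mul1r big_map big1_seq ?addr0 // => i.
rewrite mem_iota => /andP[_ lt_i]; have [vt _] := valid_take_drop i.+1 vp.
by rewrite delta_basis_size ?mul0r //= size_take_min; lia.
Qed.

Lemma cmul_delta_arrow_l (H : C -> K) a s : linf H -> valid_path ((tgt a, s) : path) ->
  cmul cC (delta (src a, [:: a])) H (b (src a, a :: s)) = H (b (tgt a, s)).
Proof.
move=> hH vp; have vas : valid_path ((src a, a :: s) : path) by [].
rewrite (cmul_basis (delta_lin _) hH vas) decomps_head big_cons.
rewrite delta_basis_size // mul0r add0r big_map /= big_cons take0 drop0.
rewrite delta_basis // eqxx mul1r big1_seq ?addr0 // => i.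
rewrite mem_iota => /andP[lt1i lt_i]; have [vt _] := valid_take_drop i.+1 vas.
by rewrite delta_basis_size ?mul0r //= size_take_min; lia.
Qed.

Lemma cmul_delta_vertex_r (G : C -> K) u s : linf G -> valid_path ((u, s) : path) ->
  cmul cC G (delta (path_end u s, [::])) (b (u, s)) = G (b (u, s)).
Proof.
move=> hG vp; rewrite (cmul_basis hG (delta_lin _) vp) decomps_last big_cat big_seq1 /=.
rewrite delta_basis // eqxx mulr1 big_map big1_seq ?add0r // => i.
rewrite mem_iota => /andP[_ lt_i]; have [_ vd] := valid_take_drop i vp.
by rewrite delta_basis_size ?mulr0 //= size_drop; lia.
Qed.

Lemma cmul_delta_arrow_r (G : C -> K) u s a : linf G -> valid_path ((u, s) : path) ->
  src a = path_end u s -> cmul cC G (delta (src a, [:: a])) (b (u, rcons s a)) = G (b (u, s)).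
Proof.
move=> hG vp sa; have vsa : valid_path ((u, rcons s a) : path) by apply: valid_rcons.
rewrite (cmul_basis hG (delta_lin _) vsa) decomps_rcons big_cat !big_cons big_nil /=.
rewrite -sa delta_basis // eqxx mulr1 delta_basis_size // mulr0 !addr0 big_map.
rewrite big1_seq ?add0r // => i; rewrite mem_iota add0n => /andP[_ /andP[_ lt_i]].
have [_] := valid_take_drop i vsa.
rewrite /= -cats1 takel_cat ?(ltnW lt_i) // drop_cat lt_i cats1 => vd.
by rewrite delta_basis_size ?mulr0 //= size_rcons size_drop; lia.
Qed.

Lemma left_eigen_tgt_eq0 a (H : C -> K) : linf H ->
  left_eigen cC (vertex (tgt a)) H -> forall c, H c = 0.
Proof.
move=> hH eigH; apply: (linf_basis_eq0 b_span hH) => -[u s] vp.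
case: (pselect (u = tgt a)) => [ua|ua].
  rewrite ua in vp *; rewrite -(cmul_delta_arrow_l hH vp) (eigH _ (delta_lin _)).
  by rewrite delta_basis_size ?mul0r.
rewrite -(cmul_delta_vertex_l hH vp) (eigH _ (delta_lin _)) delta_basis //.
by case: eqP => [[/esym]|] //; rewrite mul0r.
Qed.

Lemma right_eigen_src_eq0 a (G : C -> K) : linf G ->
  right_eigen cC (vertex (src a)) G -> forall c, G c = 0.
Proof.
move=> hG eigG; apply: (linf_basis_eq0 b_span hG) => -[u s] vp.
case: (pselect (src a = path_end u s)) => [sa|sa].
  rewrite -(cmul_delta_arrow_r hG vp sa) (eigG _ (delta_lin _)).
  by rewrite delta_basis_size ?mul0r.
rewrite -(cmul_delta_vertex_r hG vp) (eigG _ (delta_lin _)) delta_basis //.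
by case: eqP => [[]|] //; rewrite mul0r.
Qed.

Lemma left_qcF_discrete : left_qcF cC -> discrete Q.
Proof.
move=> qcF a; have /eqP := vertex_neq0 (tgt a); apply.
apply: (embeds_free_left_eigen qcF) => [f hf|]; last exact: left_eigen_tgt_eq0.
exact: (C_lact_grouplike (vertex_grouplike (tgt a)) hf).
Qed.

Lemma right_qcF_discrete : right_qcF cC -> discrete Q.
Proof.
move=> qcF a; have /eqP := vertex_neq0 (src a); apply.
apply: (embeds_free_right_eigen qcF) => [f hf|]; last exact: right_eigen_src_eq0.
exact: (C_ract_grouplike (vertex_grouplike (src a)) hf).
Qed.

Lemma coFrobenius_discrete : coFrobenius cC -> discrete Q.
Proof. by move/coFrobenius_left_qcF; exact: left_qcF_discrete. Qed.

Lemma left_fqcF_discrete : left_fqcF cC -> discrete Q.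
Proof.
move=> fqcF a; have /eqP := @oner_neq0 K; apply.
pose M := grouplike_rcomod (vertex_grouplike (tgt a)) (b_eps (p := (tgt a, [::])) I).
apply: (embeds_free_left_eigen (fqcF M (findim_regular K))) => [f hf|].
  by rewrite /rc_lact big_seq1.
exact: left_eigen_tgt_eq0.
Qed.

Lemma right_fqcF_discrete : right_fqcF cC -> discrete Q.
Proof.
move=> fqcF a; have /eqP := @oner_neq0 K; apply.
pose N := grouplike_lcomod (vertex_grouplike (src a)) (b_eps (p := (src a, [::])) I).
apply: (embeds_free_right_eigen (fqcF N (findim_regular K))) => [f hf|].
  by rewrite /lc_ract big_seq1.
exact: right_eigen_src_eq0.
Qed.

Section ArrowUnits.
Variable a : arr Q.
Local Notation x := ((src a, [:: a]) : path).

(* [geom c] is the convolution inverse of [eps - c delta_a]: the geometric series in [delta_a] *)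
Definition geom (c : K) (q : path) : K :=
  if all (fun e => `[< e = a >]) q.2 then c ^+ size q.2 else 0.

Lemma linf_eps_sub_delta c : linf (fun z => eps cC z - c * delta x z).
Proof.
move=> al y z; rewrite (eps_lin cC) (delta_lin x).
by rewrite mulrDr mulrBr mulrCA addrACA opprD.
Qed.

Lemma cmul_eps_sub_delta_geom c y :
  cmul cC (fun z => eps cC z - c * delta x z) (coord_ext b_span (geom c)) y = eps cC y.
Proof.
have hU := coord_ext_lin b_free b_span (geom c).
apply: (linf_basis_eq b_span (cmul_lin cC (linf_eps_sub_delta c) hU) (eps_lin cC)).
move=> [u s] vp; rewrite (cmul_basis (linf_eps_sub_delta c) hU vp) decomps_head big_cons.
rewrite b_eps // delta_basis_size // mulr0 subr0 mul1r coord_ext_basis //.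
case: s vp => [|e s] vp; first by rewrite big_nil addr0 b_eps.
rewrite big_map /= big_cons take0 drop0 big1_seq ?addr0; last first.
  move=> i; rewrite mem_iota => /andP[_ /andP[lt1i lti]].
  have [vt _] := valid_take_drop i.+1 vp.
  rewrite b_eps // delta_basis_size //= ?mulr0 ?subr0 ?mul0r // size_take_min; lia.
have v1 : valid_path ((u, [:: e]) : path) by case: vp.
have v2 : valid_path ((tgt e, s) : path) by case: vp.
rewrite b_eps //= sub0r coord_ext_basis // delta_basis // b_eps // /geom /=.
case: (pselect (e = a)) => [ea|ea].
  subst e; have -> : u = src a by case: vp.
  rewrite asboolT //= exprS eqxx mulr1.
  by case: all; rewrite ?mulr0 ?oppr0 ?addr0 // mulNr addrN.
rewrite asboolF //= add0r (_ : ((u, [:: e]) : path) == x = false) ?mulr0 ?oppr0 ?mul0r //.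
by apply/negbTE/eqP => -[_ /ea].
Qed.

Lemma delta_arrow_multiplicative (s : C) (lam : K) :
  (forall f g, linf f -> linf g -> cmul cC f g s = lam * (f s * g s)) -> delta x s = 0.
Proof.
move=> mult; apply: contrapT => /eqP dx0.
have lam_eps : lam * eps cC s = 1.
  apply: (mulIf dx0); rewrite mul1r -mulrA -(mult _ _ (eps_lin cC) (delta_lin x)).
  exact: cmul_eps_l (delta_lin x) s.
have := cmul_eps_sub_delta_geom (eps cC s / delta x s) s.
rewrite (mult _ _ (linf_eps_sub_delta _) (coord_ext_lin b_free b_span _)).
rewrite divfK // subrr mul0r mulr0 => eps0.
by move: lam_eps; rewrite -eps0 mulr0 => /eqP; rewrite eq_sym oner_eq0.
Qed.

End ArrowUnits.

Lemma cosemisimple_discrete : pointed cC -> cosemisimple cC -> discrete Q.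
Proof.
move=> pt [I [S [S_simple S_span _]]] a.
have : delta (src a, [:: a]) (b (src a, [:: a])) = 0.
  have [n [e [d [Sd ->]]]] := S_span (b (src a, [:: a])).
  rewrite (linf_sum _ _ (delta_lin _)) big1 // => k _.
  have [[sub _ _] [s [_ S_line]]] := (S_simple (e k), pt _ (S_simple (e k))).
  have [lam mult] := one_dim_subcoalg_multiplicative sub S_line.
  have [al ->] := (S_line (d k)).1 (Sd k).
  by rewrite (linfZ _ _ (delta_lin _)) (delta_arrow_multiplicative a mult) mulr0.
by rewrite delta_basis // eqxx => /eqP; rewrite oner_eq0.
Qed.

Lemma discrete_coFrobenius_cosemisimple : discrete Q ->
  [/\ coFrobenius cC, right_coFrobenius cC & cosemisimple cC].
Proof.
move=> dQ.
have free n (e : 'I_n -> path) (a : 'I_n -> K) :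
    injective e -> \sum_(k < n) a k *: b (e k) = 0 -> forall k, a k = 0.
  by move=> inj_e; apply: b_free => // k; case: (e k) => v [|f s] //; case: (dQ f).
have span c : exists n (e : 'I_n -> path) (a : 'I_n -> K), c = \sum_(k < n) a k *: b (e k).
  by have [n [e [a [_ ->]]]] := b_span c; exists n, e, a.
have grouplike (p : path) : teq2 (Delta cC (b p)) [:: (b p, b p)].
  by case: p => v [|f s]; [exact: vertex_grouplike | case: (dQ f)].
split; [exact: grouplike_basis_coFrobenius free span grouplike
       | exact: grouplike_basis_right_coFrobenius free span grouplike
       | exact: grouplike_basis_cosemisimple free span grouplike].
Qed.

End PathCoalgebra.

Theorem corollary4p15 (K : fieldType) (C : lmodType K) (cC : coalg C)
  (Q : quiver) (HQ : iso_path_coalg cC Q)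
  (Hher : hereditary cC) (Hpt : pointed cC) :
  [<-> left_fqcF cC; right_fqcF cC; left_qcF cC; right_qcF cC;
       coFrobenius cC; cosemisimple cC; discrete Q].
Proof.
case: HQ => b [b_free b_span b_Delta b_eps].
have from_discrete := discrete_coFrobenius_cosemisimple b_free b_span b_Delta.
tfae.
- move/(left_fqcF_discrete b_free b_span b_Delta b_eps)/from_discrete => -[_ rcF _].
  exact: right_coFrobenius_right_fqcF.
- move/(right_fqcF_discrete b_free b_span b_Delta b_eps)/from_discrete => -[cF _ _].
  exact: coFrobenius_left_qcF.
- move/(left_qcF_discrete b_free b_span b_Delta)/from_discrete => -[_ rcF _].
  exact: right_coFrobenius_right_qcF.
- by move/(right_qcF_discrete b_free b_span b_Delta)/from_discrete => -[].
- by move/(coFrobenius_discrete b_free b_span b_Delta)/from_discrete => -[].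
- exact: cosemisimple_discrete b_free b_span b_Delta b_eps Hpt.
- by move/from_discrete => -[cF _ _]; exact: coFrobenius_left_fqcF.
Qed.
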